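(* For all integers $m,n\geq 1$, \[p^{ed}_{od}(m,n)-p^{ed}_{od}(m,n-1)=D_e(m,n-1)+D_e(m-1,n-1)-D_o(m,n-1).\]
   Context: $\mathcal{P}^{ed}_{od}$ is the set of integer partitions such that: - all parts are distinct; - every odd part is smaller than every even part; - at least one odd part appears. For integers $m,n\ge 0$: - $p^{ed}_{od}(m,n)$ is the number of partitions of $n$ in $\mathcal{P}^{ed}_{od}$ with exactly $m$ parts; in particular $p^{ed}_{od}(m,0)=0$. - $D_o(m,n)$ is the number of partitions of $n$ into exactly $m$ distinct odd parts. - $D_e(m,n)$ is the number of partitions of $n$ into exactly $m$ distinct even parts. - By convention $D_e(0,n)=D_o(0,n)$ equals $1$ if $n=0$ and $0$ otherwise. *)

(* Partitions into distinct parts of n are encoded as finite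
   sets A of positive integers <= n (elements of 'I_n.+1, 0 excluded) whose
   elements sum to n; the parts are the elements of A. *)
From mathcomp Require Import all_boot all_order all_algebra.
Set Implicit Arguments. Unset Strict Implicit. Unset Printing Implicit Defensive.

Definition dpart (n : nat) (A : {set 'I_n.+1}) : bool :=
  (ord0 \notin A) && (\sum_(i in A) val i == n).

Definition p_edod (m n : nat) : nat :=
  #|[set A : {set 'I_n.+1} | [&& dpart A, #|A| == m,
      [exists i in A, odd (val i)] &
      [forall i in A, forall j in A, (odd (val i) && ~~ odd (val j)) ==> (val i < val j)]]]|.

Definition D_o (m n : nat) : nat :=
  #|[set A : {set 'I_n.+1} | [&& dpart A, #|A| == m & [forall i in A, odd (val i)]]]|.

Definition D_e (m n : nat) : nat :=
  #|[set A : {set 'I_n.+1} | [&& dpart A, #|A| == m & [forall i in A, ~~ odd (val i)]]]|.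

(* Let Q(m,n) be the set of partitions of n into m distinct parts in which
   0 may occur as a part, every odd part is smaller than every even part and
   at least one even part occurs.
   1. Lowering the largest odd part x of a partition counted by p_edod(m,n+1)
      to the even number x-1 (which becomes its smallest even part) is a
      bijection onto Q(m,n); its inverse raises the smallest even part by one.
      Both maps are instances of a general relabelling of a set of ordinals
      by a function on their values (section Relabel).
   2. Split Q(m,n) according to the presence of an odd part: those with an
      odd part are exactly the p_edod(m,n)-partitions having an even part;
      those without are partitions into distinct even parts, counted by
      D_e(m,n) when 0 is not a part and by D_e(m-1,n) when it is.
   3. The p_edod(m,n)-partitions without even parts are counted by D_o(m,n). *)
From mathcomp Require Import all_boot all_order all_algebra.
From mathcomp Require Import zify.
Import Order.TTheory.
Set Implicit Arguments. Unset Strict Implicit. Unset Printing Implicit Defensive.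

Lemma card_in_bij (T1 T2 : finType) (X : {set T1}) (Y : {set T2})
    (f : T1 -> T2) (g : T2 -> T1) :
  {in X, forall x, f x \in Y} -> {in Y, forall y, g y \in X} ->
  {in X, cancel f g} -> {in Y, cancel g f} -> #|X| = #|Y|.
Proof.
move=> fX gY gK fK.
have f_inj : {in X &, injective f} by move=> x x' xX x'X e; rewrite -(gK x xX) e gK.
rewrite -(card_in_imset f_inj); apply: eq_card => y.
apply/imsetP/idP => [[x xX ->]|yY]; first exact: fX.
by exists (g y); rewrite ?gY ?fK.
Qed.

Definition odd_before_even K (A : {set 'I_K}) : bool :=
  [forall i in A, forall j in A, (odd (val i) && ~~ odd (val j)) ==> (val i < val j)].

Lemma odd_before_evenP K (A : {set 'I_K}) :
  reflect (forall i j, i \in A -> j \in A -> odd i -> ~~ odd j -> i < j)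
          (odd_before_even A).
Proof.
apply: (iffP forall_inP) => [H i j iA jA oi ej | H i iA].
  by move/forall_inP: (H i iA) => /(_ j jA) /implyP; apply; rewrite oi ej.
by apply/forall_inP => j jA; apply/implyP => /andP[oi ej]; apply: H.
Qed.

(* The largest odd and the smallest even element of a set of ordinals
   (meaningful when such elements exist). *)
Definition max_odd K (A : {set 'I_K}) : nat := \max_(i in A | odd i) val i.
Definition min_even K (A : {set 'I_K}) : nat := \big[Order.min/K]_(i in A | ~~ odd i) val i.

Lemma max_odd_eq K (A : {set 'I_K}) (x : 'I_K) : x \in A -> odd x ->
  (forall i, i \in A -> odd i -> i <= x) -> max_odd A = x.
Proof.
move=> xA ox xmax; apply/eqP; rewrite eqn_leq; apply/andP; split.
  by apply/bigmax_leqP => i /andP[]; apply: xmax.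
by apply: (leq_bigmax_cond (F := fun i : 'I_K => val i)); rewrite xA.
Qed.

Lemma min_even_eq K (A : {set 'I_K}) (y : 'I_K) : y \in A -> ~~ odd y ->
  (forall i, i \in A -> ~~ odd i -> y <= i) -> min_even A = y.
Proof.
move=> yA ey ymin; apply: le_anti; rewrite bigmin_le_cond ?yA //=.
by rewrite le_bigmin // leEnat ?(ltnW (ltn_ord y)) // => i /andP[]; apply: ymin.
Qed.

Lemma max_oddP K (A : {set 'I_K}) :
  odd_before_even A -> [exists i in A, odd (val i)] ->
  exists2 x : 'I_K, x \in A &
    [/\ max_odd A = x, odd x, forall i, i \in A -> odd i -> i <= x
      & forall i, i \in A -> i != x.-1 :> nat].
Proof.
move=> /odd_before_evenP obe /exists_inP[i0 i0A oi0].
have [|x /andP[xA ox] xmax] := @arg_maxnP _ i0 (fun i => (i \in A) && odd i) val.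
  by rewrite i0A.
have {}xmax i : i \in A -> odd i -> i <= x by move=> iA oi; apply: xmax; rewrite iA.
exists x => //; split => //; first exact: max_odd_eq.
move=> i iA; apply/eqP => ix; have ei : ~~ odd i by rewrite ix; lia.
by have := obe _ _ xA iA ox ei; lia.
Qed.

Lemma min_evenP K (A : {set 'I_K}) :
  odd_before_even A -> [exists i in A, ~~ odd (val i)] ->
  exists2 y : 'I_K, y \in A &
    [/\ min_even A = y, ~~ odd y, forall i, i \in A -> ~~ odd i -> y <= i
      & forall i, i \in A -> i != y.+1 :> nat].
Proof.
move=> /odd_before_evenP obe /exists_inP[i0 i0A ei0].
have [|y /andP[yA ey] ymin] := @arg_minnP _ i0 (fun i => (i \in A) && ~~ odd i) val.
  by rewrite i0A.
have {}ymin i : i \in A -> ~~ odd i -> y <= i by move=> iA ei; apply: ymin; rewrite iA.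
exists y => //; split => //; first exact: min_even_eq.
move=> i iA; apply/eqP => iy; have oi : odd i by rewrite iy; lia.
by have := obe _ _ iA yA oi ey; lia.
Qed.

Section Relabel.
Variables (K L : nat) (A : {set 'I_K}) (f : nat -> nat).

Definition relabel : {set 'I_L.+1} := [set inord (f i) | i : 'I_K in A].

Hypothesis f_fits : forall i : 'I_K, i \in A -> f i <= L.

Lemma val_relabel (i : 'I_K) : i \in A -> nat_of_ord (inord (f i) : 'I_L.+1) = f i.
Proof. by move=> iA; rewrite inordK // ltnS f_fits. Qed.

Lemma relabelP (j : 'I_L.+1) : reflect (exists2 i, i \in A & j = f i :> nat) (j \in relabel).
Proof.
apply: (iffP imsetP) => [[i iA ->]|[i iA ji]]; exists i => //; first exact: val_relabel.
by apply: val_inj; rewrite /= val_relabel.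
Qed.

Hypothesis f_inj : {in A &, injective (fun i : 'I_K => f i)}.

Lemma relabel_inj : {in A &, injective (fun i : 'I_K => inord (f i) : 'I_L.+1)}.
Proof.
by move=> i j iA jA /(congr1 val) /=; rewrite !val_relabel // => /f_inj; apply.
Qed.

Lemma card_relabel : #|relabel| = #|A|.
Proof. exact: card_in_imset relabel_inj. Qed.

Lemma sum_relabel : \sum_(j in relabel) j = \sum_(i in A) f i.
Proof. by rewrite big_imset /=; [apply: eq_bigr => i; apply: val_relabel | exact: relabel_inj]. Qed.

End Relabel.
Arguments relabel {K} L A f.

Lemma relabelK M L (A : {set 'I_M.+1}) (f g : nat -> nat) :
  (forall i : 'I_M.+1, i \in A -> f i <= L) ->
  (forall i : 'I_M.+1, i \in A -> g (f i) = i) ->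
  relabel M (relabel L A f) g = A.
Proof.
move=> f_fits gK; rewrite /relabel -imset_comp -[RHS]imset_id.
apply: eq_in_imset => i iA /=; apply: val_inj => /=.
by rewrite (val_relabel f_fits) // gK // inordK.
Qed.

Lemma odd_before_even_relabel K L (A : {set 'I_K}) (f : nat -> nat) :
  (forall i : 'I_K, i \in A -> f i <= L) ->
  (forall i j : 'I_K, i \in A -> j \in A -> odd (f i) -> ~~ odd (f j) -> f i < f j) ->
  odd_before_even (relabel L A f).
Proof.
move=> f_fits f_obe; apply/odd_before_evenP => i' j'.
move=> /(relabelP f_fits)[i iA ->] /(relabelP f_fits)[j jA ->]; exact: f_obe.
Qed.

Lemma leq_sum_two K (A : {set 'I_K}) (i j : 'I_K) : i \in A -> j \in A -> i != j ->
  i + j <= \sum_(k in A) k.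
Proof.
move=> iA jA ij; rewrite (bigD1 i) //= (bigD1 j) /=; last by rewrite jA eq_sym.
by rewrite addnA leq_addr.
Qed.

Definition Pset m n : {set {set 'I_n.+1}} :=
  [set A : {set 'I_n.+1} | [&& dpart A, #|A| == m, [exists i in A, odd (val i)] & odd_before_even A]].

Definition Qset m n : {set {set 'I_n.+1}} :=
  [set A : {set 'I_n.+1} | [&& \sum_(i in A) val i == n, #|A| == m,
               [exists i in A, ~~ odd (val i)] & odd_before_even A]].

Lemma PsetP m n (A : {set 'I_n.+1}) : A \in Pset m n ->
  [/\ ord0 \notin A, \sum_(i in A) i = n, #|A| = m,
      [exists i in A, odd (val i)] & odd_before_even A].
Proof. by rewrite inE /dpart => /and4P[/andP[A0 /eqP sumA] /eqP cardA]. Qed.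

Lemma QsetP m n (A : {set 'I_n.+1}) : A \in Qset m n ->
  [/\ \sum_(i in A) i = n, #|A| = m, [exists i in A, ~~ odd (val i)] & odd_before_even A].
Proof. by rewrite inE => /and4P[/eqP sumA /eqP cardA]. Qed.

Section LowerMaxOdd.
Variables (m n : nat) (A : {set 'I_n.+2}) (x : 'I_n.+2).
Hypothesis A_P : A \in Pset m n.+1.
Hypotheses (xA : x \in A) (ox : odd x) (x_max : forall i, i \in A -> odd i -> i <= x).
Hypothesis x_pred : forall i, i \in A -> i != x.-1 :> nat.

Let lower (k : nat) : nat := k - (k == x).

Lemma lower_fits (i : 'I_n.+2) : i \in A -> lower i <= n.
Proof.
have [_ sumA _ _ _] := PsetP A_P; move=> iA; rewrite /lower.
have [<-|ix] := eqVneq i x; first by have := ltn_ord i; lia.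
by have := leq_sum_two iA xA ix; rewrite sumA; lia.
Qed.

Lemma lower_inj : {in A &, injective (fun i : 'I_n.+2 => lower i)}.
Proof.
move=> i j iA jA; have := x_pred iA; have := x_pred jA; rewrite /lower => *.
by apply: ord_inj; lia.
Qed.

Lemma lower_in_Q : relabel n A lower \in Qset m n.
Proof.
have [_ sumA cardA _ /odd_before_evenP obeA] := PsetP A_P.
rewrite inE (card_relabel lower_fits lower_inj) cardA eqxx /=.
apply/and3P; split.
- rewrite (sum_relabel lower_fits lower_inj) (bigD1 x) //= /lower eqxx.
  under eq_bigr => i /andP[_ ix] do rewrite (negbTE (ix : i != x :> nat)) subn0.
  by move: sumA; rewrite (bigD1 x) //=; lia.
- apply/exists_inP; exists (inord (lower x)); first exact: imset_f.
  by rewrite (val_relabel lower_fits) // /lower eqxx; lia.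
- apply: odd_before_even_relabel => [|i j iA jA]; first exact: lower_fits.
  by have := x_max iA; have := obeA _ _ iA jA; rewrite /lower; lia.
Qed.

Lemma min_even_lower : min_even (relabel n A lower) = x.-1.
Proof.
have [_ _ _ _ /odd_before_evenP obeA] := PsetP A_P.
have lower_x : nat_of_ord (inord (lower x) : 'I_n.+1) = x.-1.
  by rewrite (val_relabel lower_fits) // /lower eqxx subn1.
rewrite -lower_x; apply: min_even_eq; first exact: imset_f.
  by rewrite lower_x; lia.
move=> j' /(relabelP lower_fits)[j jA ->]; rewrite lower_x.
by have := obeA _ _ xA jA ox; rewrite /lower; lia.
Qed.

Lemma lowerK : relabel n.+1 (relabel n A lower) (fun k => k + (k == x.-1)) = A.
Proof.
apply: relabelK => [i|i iA]; first exact: lower_fits.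
by have := x_pred iA; rewrite /lower; lia.
Qed.
End LowerMaxOdd.

Section RaiseMinEven.
Variables (m n : nat) (B : {set 'I_n.+1}) (y : 'I_n.+1).
Hypothesis B_Q : B \in Qset m n.
Hypotheses (yB : y \in B) (ey : ~~ odd y) (y_min : forall i, i \in B -> ~~ odd i -> y <= i).
Hypothesis y_succ : forall i, i \in B -> i != y.+1 :> nat.

Let raise (k : nat) : nat := k + (k == y).

Lemma raise_fits (i : 'I_n.+1) : i \in B -> raise i <= n.+1.
Proof. by move=> _; have := ltn_ord i; rewrite /raise; lia. Qed.

Lemma raise_inj : {in B &, injective (fun i : 'I_n.+1 => raise i)}.
Proof.
move=> i j iB jB; have := y_succ iB; have := y_succ jB; rewrite /raise => *.
by apply: ord_inj; lia.
Qed.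

Lemma raise_in_P : relabel n.+1 B raise \in Pset m n.+1.
Proof.
have [sumB cardB _ /odd_before_evenP obeB] := QsetP B_Q.
rewrite inE /dpart (card_relabel raise_fits raise_inj) cardB eqxx /=.
apply/and3P; split; [apply/andP; split | |].
- apply/(relabelP raise_fits) => -[j jB j0]; have := y_min jB.
  by move: j0; rewrite /raise /=; lia.
- rewrite (sum_relabel raise_fits raise_inj) (bigD1 y) //= /raise eqxx.
  under eq_bigr => i /andP[_ iy] do rewrite (negbTE (iy : i != y :> nat)) addn0.
  by move: sumB; rewrite (bigD1 y) //=; lia.
- apply/exists_inP; exists (inord (raise y)); first exact: imset_f.
  by rewrite (val_relabel raise_fits) // /raise eqxx; lia.
- apply: odd_before_even_relabel => [|i j iB jB]; first exact: raise_fits.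
  by have := y_min jB; have := obeB _ _ iB jB; rewrite /raise; lia.
Qed.

Lemma max_odd_raise : max_odd (relabel n.+1 B raise) = y.+1.
Proof.
have [_ _ _ /odd_before_evenP obeB] := QsetP B_Q.
have raise_y : nat_of_ord (inord (raise y) : 'I_n.+2) = y.+1.
  by rewrite (val_relabel raise_fits) // /raise eqxx addn1.
rewrite -raise_y; apply: max_odd_eq; first exact: imset_f.
  by rewrite raise_y; lia.
move=> j' /(relabelP raise_fits)[j jB ->]; rewrite raise_y.
by have := obeB _ _ jB yB; rewrite /raise; lia.
Qed.

Lemma raiseK : relabel n (relabel n.+1 B raise) (fun k => k - (k == y.+1)) = B.
Proof.
apply: relabelK => [i|i iB]; first exact: raise_fits.
by have := y_succ iB; rewrite /raise; lia.
Qed.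
End RaiseMinEven.

Definition lower_max_odd n (A : {set 'I_n.+2}) : {set 'I_n.+1} :=
  relabel n A (fun k => k - (k == max_odd A)).

Definition raise_min_even n (B : {set 'I_n.+1}) : {set 'I_n.+2} :=
  relabel n.+1 B (fun k => k + (k == min_even B)).

Lemma lower_max_oddP m n (A : {set 'I_n.+2}) : A \in Pset m n.+1 ->
  lower_max_odd A \in Qset m n /\ raise_min_even (lower_max_odd A) = A.
Proof.
move=> A_P; have [_ _ _ oddA obeA] := PsetP A_P.
have [x xA [x_def ox x_max x_pred]] := max_oddP obeA oddA.
rewrite /raise_min_even /lower_max_odd x_def (min_even_lower A_P) //.
by rewrite (lowerK A_P) //; split=> //; apply: lower_in_Q.
Qed.

Lemma raise_min_evenP m n (B : {set 'I_n.+1}) : B \in Qset m n ->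
  raise_min_even B \in Pset m n.+1 /\ lower_max_odd (raise_min_even B) = B.
Proof.
move=> B_Q; have [_ _ evenB obeB] := QsetP B_Q.
have [y yB [y_def ey y_min y_succ]] := min_evenP obeB evenB.
rewrite /raise_min_even /lower_max_odd y_def (max_odd_raise B_Q) //.
by rewrite (raiseK B_Q) //; split=> //; apply: raise_in_P.
Qed.

Lemma card_P_Q m n : #|Pset m n.+1| = #|Qset m n|.
Proof.
apply: (@card_in_bij _ _ _ _ (@lower_max_odd n) (@raise_min_even n)) => S S_in.
- exact: (lower_max_oddP S_in).1.
- exact: (raise_min_evenP S_in).1.
- exact: (lower_max_oddP S_in).2.
- exact: (raise_min_evenP S_in).2.
Qed.

Definition has_odd n : {set {set 'I_n.+1}} := [set B : {set 'I_n.+1} | [exists i in B, odd (val i)]].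
Definition has_even n : {set {set 'I_n.+1}} := [set B : {set 'I_n.+1} | [exists i in B, ~~ odd (val i)]].
Definition has_zero n : {set {set 'I_n.+1}} := [set B : {set 'I_n.+1} | ord0 \in B].

Definition Doset m n : {set {set 'I_n.+1}} :=
  [set A : {set 'I_n.+1} | [&& dpart A, #|A| == m & [forall i in A, odd (val i)]]].
Definition Deset m n : {set {set 'I_n.+1}} :=
  [set A : {set 'I_n.+1} | [&& dpart A, #|A| == m & [forall i in A, ~~ odd (val i)]]].

(* A member of Q with an odd part cannot contain the even part 0, so it is a
   p_edod-partition having an even part. *)
Lemma Q_has_odd m n : Qset m n :&: has_odd n = Pset m n :&: has_even n.
Proof.
apply/setP => B; rewrite !inE /dpart; apply/idP/idP.
- case/andP => /and4P[-> -> -> obe] oddB; rewrite oddB obe !andbT.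
  apply/negP => B0; case/exists_inP: oddB => i iB oi.
  by have := odd_before_evenP _ obe i ord0 iB B0 oi isT.
- by case/andP => /and4P[/andP[_ ->] -> -> ->] ->.
Qed.

Lemma P_no_even m n : 0 < m -> Pset m n :\: has_even n = Doset m n.
Proof.
move=> m_gt0; apply/setP => B; rewrite !inE; apply/idP/idP.
- case/andP => noeven /and4P[-> -> _ _] /=.
  apply/forall_inP => i iB; apply: contraR noeven => ei.
  by apply/exists_inP; exists i.
- case/and3P => -> cardB allodd.
  have [i0 i0B] : exists i0, i0 \in B by apply/card_gt0P; rewrite (eqP cardB).
  rewrite cardB /=; apply/and3P; split.
  + by apply/exists_inP => -[i iB]; rewrite (forall_inP allodd i iB).
  + by apply/exists_inP; exists i0 => //; apply: (forall_inP allodd).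
  + by apply/odd_before_evenP => i j _ jB _; rewrite (forall_inP allodd j jB).
Qed.

Lemma Q_no_odd_no_zero m n : 0 < m -> (Qset m n :\: has_odd n) :\: has_zero n = Deset m n.
Proof.
move=> m_gt0; apply/setP => B; rewrite !inE /dpart; apply/idP/idP.
- case/and3P => -> noodd /and4P[-> -> _ _] /=.
  apply/forall_inP => i iB; apply: contra noodd => oi.
  by apply/exists_inP; exists i.
- case/and3P => /andP[-> ->] cardB alleven.
  have [i0 i0B] : exists i0, i0 \in B by apply/card_gt0P; rewrite (eqP cardB).
  rewrite cardB /=; apply/and3P; split.
  + by apply/exists_inP => -[i iB]; rewrite (negbTE (forall_inP alleven i iB)).
  + by apply/exists_inP; exists i0 => //; apply: (forall_inP alleven).
  + by apply/odd_before_evenP => i j iB _; rewrite (negbTE (forall_inP alleven i iB)).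
Qed.

Lemma card_Q_no_odd_zero m n :
  #|(Qset m.+1 n :\: has_odd n) :&: has_zero n| = #|Deset m n|.
Proof.
apply: (@card_in_bij _ _ _ _ (fun B => B :\ ord0) (fun C => ord0 |: C)).
- move=> B; rewrite !inE /dpart => /andP[/and5P[noodd /eqP sumB /eqP cardB _ _] B0].
  rewrite setD11 /=; apply/and3P; split.
  + by move: sumB; rewrite (big_setD1 ord0) //= add0n => ->.
  + by move: cardB; rewrite (cardsD1 ord0) B0 add1n => -[->].
  + apply/forall_inP => i; rewrite in_setD1 => /andP[_ iB]; apply: contra noodd => oi.
    by apply/exists_inP; exists i.
- move=> C; rewrite !inE /dpart => /and3P[/andP[C0 /eqP sumC] /eqP cardC alleven].
  rewrite eqxx andbT; apply/and5P; split.
  + apply/exists_inP => -[i]; rewrite in_setU1 => /predU1P[-> //|iC].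
    by rewrite (negbTE (forall_inP alleven i iC)).
  + by rewrite big_setU1 //= sumC.
  + by rewrite cardsU1 C0 cardC.
  + by apply/exists_inP; exists ord0; rewrite ?setU11.
  + apply/odd_before_evenP => i j; rewrite in_setU1 => /predU1P[-> //|iC] _.
    by rewrite (negbTE (forall_inP alleven i iC)).
- by move=> B; rewrite !inE => /andP[_ B0]; rewrite setD1K.
- by move=> C; rewrite !inE => /and3P[/andP[C0 _] _ _]; rewrite setU1K.
Qed.

Local Open Scope ring_scope.

Theorem mainTheorem4 (m n : nat) (hm : (1 <= m)%N) (hn : (1 <= n)%N) :
  (p_edod m n)%:Z - (p_edod m n.-1)%:Z
  = (D_e m n.-1)%:Z + (D_e m.-1 n.-1)%:Z - (D_o m n.-1)%:Z.
Proof.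
case: n hn => [//|n] _; case: m hm => [//|m] _; rewrite !succnK.
pose QO := Qset m.+1 n :&: has_odd n.
have p_succ : p_edod m.+1 n.+1 = (#|QO| + (#|Deset m n| + #|Deset m.+1 n|))%N.
  rewrite -[p_edod _ _]/#|Pset m.+1 n.+1| card_P_Q -(cardsID (has_odd n)).
  by rewrite -(cardsID (has_zero n) (_ :\: _)) card_Q_no_odd_zero Q_no_odd_no_zero.
have p_same : p_edod m.+1 n = (#|QO| + #|Doset m.+1 n|)%N.
  by rewrite -[p_edod _ _]/#|Pset m.+1 n| -(cardsID (has_even n)) P_no_even // /QO Q_has_odd.
rewrite p_succ p_same -[D_e _ _]/#|Deset _ _| -[D_e m n]/#|Deset _ _|.
rewrite -[D_o _ _]/#|Doset _ _|; lia.
Qed.
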